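(* In the setting of the context: (i) If $\omega\notin i\mathbb{R}$ and $|\omega_\Im|$ is large enough, then $\omega\notin W_\Omega(T)$. (ii) For sequences $\{\omega^n\}\subset W_\Omega(T)$ with $|\omega^n_\Re|\to\infty$ as $n\to\infty$, it holds that $\hat\beta(\omega^n)\sim-2\omega^n_\Im(\omega^n_\Re)^2/d$ and $\omega^n_\Im=O((\omega^n_\Re)^{-2})$. (iii) If $\omega\notin i\mathbb{R}\cup\partial\mathcal{D}$, then $\hat\beta(\omega)\ge0$ if and only if $\omega\in\Pi_\beta$. (iv) If $\omega\notin i\mathbb{R}\cup\partial\mathcal{D}$, then $\hat\alpha(\omega)\ge0$ if and only if $\omega\in\Pi_\alpha$.
   Context: Let $\mathcal{H}$ be a Hilbert space, $A$ a selfadjoint (possibly unbounded) operator in $\mathcal{H}$ and $B$ a nonzero bounded selfadjoint operator. Let $c\ge0$, $d>0$, $\delta_\pm:=\pm\sqrt{c-d^2/4}-id/2$ (principal square root). $W(A),W(B)\subset\mathbb{R}$ are the numerical ranges. For real $\alpha,\beta$ let $p_{(\alpha,\beta)}(\omega):=(\alpha-\omega^2)(c-id\omega-\omega^2)-\beta\omega^2$ with roots $r_1,\dots,r_4$ labelled continuously in $(\alpha,\beta)$ and extended by limits to $\overline{\mathbb{R}}\times\mathbb{R}$ ($\overline{\mathbb{R}}=\mathbb{R}\cup\{\pm\infty\}$), values in $\overline{\mathbb{C}}$. Let $\Omega:=\overline{W(A)}\times\overline{W(B)}$ (closure of $W(A)$ in $\overline{\mathbb{R}}$) and $W_\Omega(T):=\bigcup_{n=1}^4\bigcup_{(\alpha,\beta)\in\Omega}r_n(\alpha,\beta)$.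 Let $\mathcal{D}:=\{\omega:|\omega+ic/d|<c/d\}$. Write $\omega=\omega_\Re+i\omega_\Im$ and define $\hat\beta(\omega):=\frac{-2\omega_\Im\left((-\omega_\Re^2+\omega_\Im^2+d\omega_\Im+c)^2+\omega_\Re^2(2\omega_\Im+d)^2\right)}{d|\omega|^2+2c\omega_\Im}$, $\hat\alpha(\omega):=\frac{(2\omega_\Im+d)|\omega|^4}{d|\omega|^2+2c\omega_\Im}$ (defined for $\omega\notin\partial\mathcal{D}$). Let $\Pi_\beta:=\{\omega\in\mathbb{C}\setminus\overline{\mathcal{D}}:\omega_\Im\le0\}$ and $\Pi_\alpha:=\{\omega\in\mathbb{C}\setminus\overline{\mathcal{D}}:\omega_\Im\ge-d/2\}\cup\{\omega\in\mathcal{D}:\omega_\Im\le-d/2\}$. *)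

From HB Require Import structures.
From mathcomp Require Import all_boot all_order all_algebra.
From mathcomp Require Import complex.
From mathcomp Require Import all_classical all_reals.
From mathcomp Require Import ereal topology normedtype sequences landau.
Set Implicit Arguments. Unset Strict Implicit. Unset Printing Implicit Defensive.
Import Order.TTheory GRing.Theory Num.Theory.
Import numFieldNormedType.Exports.
Local Open Scope classical_set_scope.
Local Open Scope ring_scope.

Definition is_inner_product (R : realType) (H : lmodType R[i])
  (ip : H -> H -> R[i]) : Prop :=
  [/\ (forall (a : R[i]) (x y z : H), ip (a *: x + y) z = a * ip x z + ip y z),
      (forall x y : H, ip y x = conjc (ip x y)),
      (forall x : H, 0 <= complex.Re (ip x x)) &
      (forall x : H, ip x x = 0 -> x = 0)].

Definition hnorm (R : realType) (H : lmodType R[i]) (ip : H -> H -> R[i])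
  (x : H) : R := Num.sqrt (complex.Re (ip x x)).

Definition is_complete (R : realType) (H : lmodType R[i])
  (ip : H -> H -> R[i]) : Prop :=
  forall u : nat -> H,
    (forall e : R, 0 < e -> exists N : nat, forall m n : nat,
        (N <= m)%N -> (N <= n)%N -> hnorm ip (u m - u n) < e) ->
    exists l : H, forall e : R, 0 < e -> exists N : nat, forall n : nat,
        (N <= n)%N -> hnorm ip (u n - l) < e.

Definition is_hilbert (R : realType) (H : lmodType R[i])
  (ip : H -> H -> R[i]) : Prop := is_inner_product ip /\ is_complete ip.

(* A (possibly unbounded) selfadjoint operator with domain D:
   D is a dense linear subspace, A is linear on D, and the graph of the
   adjoint A^* equals the graph of A, i.e.
   (y \in dom A^* and A^* y = z)  <->  (y \in D and A y = z). *)
Definition unbounded_selfadjoint (R : realType) (H : lmodType R[i])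
  (ip : H -> H -> R[i]) (D : set H) (A : H -> H) : Prop :=
  [/\ D 0,
      (forall (a : R[i]) (x y : H), D x -> D y -> D (a *: x + y)),
      (forall (a : R[i]) (x y : H), D x -> D y -> A (a *: x + y) = a *: A x + A y),
      (forall (x : H) (e : R), 0 < e -> exists2 y, D y & hnorm ip (x - y) < e) &
      (forall y z : H, (forall x : H, D x -> ip (A x) y = ip x z) <-> (D y /\ z = A y))].

Definition bounded_selfadjoint (R : realType) (H : lmodType R[i])
  (ip : H -> H -> R[i]) (B : H -> H) : Prop :=
  [/\ (forall (a : R[i]) (x y : H), B (a *: x + y) = a *: B x + B y),
      (exists M : R, forall x : H, hnorm ip (B x) <= M * hnorm ip x) &
      (forall x y : H, ip (B x) y = ip x (B y))].

(* Numerical range W(A) = { <Ax,x> : x \in dom A, ||x|| = 1 }, which is a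
   subset of the reals for a symmetric operator; we record it as a set of
   reals r with <Ax,x> = r (as a complex number). *)
Definition numrange (R : realType) (H : lmodType R[i])
  (ip : H -> H -> R[i]) (D : set H) (A : H -> H) : set R :=
  [set r : R | exists x : H, [/\ D x, ip x x = 1 & ip (A x) x = (r%:C)%C]].

Definition cmod (R : realType) (w : R[i]) : R :=
  Num.sqrt (complex.Re w ^+ 2 + complex.Im w ^+ 2).

Definition pquart (R : realType) (c d a b : R) (w : R[i]) : R[i] :=
  ((a%:C)%C - w ^+ 2) * ((c%:C)%C - ((d%:C)%C * 'i%C) * w - w ^+ 2)
  - (b%:C)%C * w ^+ 2.

(* w is a root r_n(a,b) of p_(a,b) for some n, where for a = +-oo the
   roots are extended by limits: w is then a limit of roots of
   p_(a_k,b_k) along real (a_k, b_k) -> (a, b). *)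
Definition ext_root (R : realType) (c d : R) (a : \bar R) (b : R) (w : R[i])
  : Prop :=
  match a with
  | EFin a0 => pquart c d a0 b w = 0
  | _ => exists (ak bk : nat -> R) (wk : nat -> R[i]),
      [/\ (fun k => (ak k)%:E) @ \oo --> a,
          bk @ \oo --> b,
          (forall e : R, 0 < e -> exists N : nat, forall k : nat,
              (N <= k)%N -> cmod (wk k - w) < e) &
          (forall k : nat, pquart c d (ak k) (bk k) (wk k) = 0)]
  end.

(* Omega = closure of W(A) in the extended reals  x  closure of W(B) in R;
   W_Omega(T) = union of all r_n(a,b), (a,b) in Omega (finite values). *)
Definition WOmega (R : realType) (c d : R) (WA WB : set R) : set R[i] :=
  [set w : R[i] | exists (a : \bar R) (b : R),
      [/\ closure (EFin @` WA) a, closure WB b & ext_root c d a b w]].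

Definition diskD (R : realType) (c d : R) (w : R[i]) : Prop :=
  cmod (w + Complex 0 (c / d)) < c / d.
Definition cldiskD (R : realType) (c d : R) (w : R[i]) : Prop :=
  cmod (w + Complex 0 (c / d)) <= c / d.
Definition bdD (R : realType) (c d : R) (w : R[i]) : Prop :=
  cmod (w + Complex 0 (c / d)) = c / d.

Definition betahat (R : realType) (c d : R) (w : R[i]) : R :=
  let x := complex.Re w in let y := complex.Im w in
  (- 2 * y * ((- x ^+ 2 + y ^+ 2 + d * y + c) ^+ 2 + x ^+ 2 * (2 * y + d) ^+ 2))
  / (d * (x ^+ 2 + y ^+ 2) + 2 * c * y).

Definition alphahat (R : realType) (c d : R) (w : R[i]) : R :=
  let x := complex.Re w in let y := complex.Im w in
  ((2 * y + d) * (x ^+ 2 + y ^+ 2) ^+ 2) / (d * (x ^+ 2 + y ^+ 2) + 2 * c * y).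

Definition Pi_beta (R : realType) (c d : R) (w : R[i]) : Prop :=
  ~ cldiskD c d w /\ complex.Im w <= 0.

Definition Pi_alpha (R : realType) (c d : R) (w : R[i]) : Prop :=
  (~ cldiskD c d w /\ - d / 2 <= complex.Im w) \/ (diskD c d w /\ complex.Im w <= - d / 2).

From HB Require Import structures.
From mathcomp Require Import all_boot all_order all_algebra.
From mathcomp Require Import complex.
From mathcomp Require Import all_classical all_reals.
From mathcomp Require Import ereal topology normedtype sequences landau.
From mathcomp Require Import ring lra.
Set Implicit Arguments. Unset Strict Implicit. Unset Printing Implicit Defensive.
Import Order.TTheory GRing.Theory Num.Theory.
Import numFieldNormedType.Exports.
Local Open Scope classical_set_scope.
Local Open Scope ring_scope.

(* Write w = x + iy.  Eliminating alpha from p_(alpha,beta)(w) = 0 shows that a root with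
   x <> 0 satisfies beta * hat_den(x,y) = -2y hat_sos(x,y), i.e. beta = betahat(w), where
   hat_den = d|w|^2 + 2cy is d times the power of w with respect to the circle bdD and
   hat_sos is a sum of two squares, positive off iR and bdD.  Since beta ranges over the
   bounded set closure W(B), this relation bounds |y| (through |y|^3 <= 9 K (d + 2c)), then
   |y| x^2 for large |x|, and on such a strip betahat(w) = -2yx^2/d (1 + O(x^-2)).  Every point of
   W_Omega(T) is a limit of such roots (at alpha = +-oo by definition), so the bounds pass
   to W_Omega(T); (iii) and (iv) are sign computations on the formulas for betahat and
   alphahat. *)

Lemma divr_ge0E (R : realFieldType) (a b : R) : b != 0 -> (0 <= a / b) = (0 <= a * b).
Proof.
move=> b0; have -> : a * b = a / b * b ^+ 2 by rewrite expr2 mulrA divfK.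
by rewrite [RHS]pmulr_lge0 // exprn_even_gt0.
Qed.

Lemma normr_Re_le_cmod (R : realType) (z : R[i]) : `|complex.Re z| <= cmod z.
Proof.
rewrite /cmod -sqrtr_sqr ler_sqrt ?addr_ge0 ?sqr_ge0 //.
by rewrite -[X in X <= _]addr0 lerD2l sqr_ge0.
Qed.

Lemma normr_Im_le_cmod (R : realType) (z : R[i]) : `|complex.Im z| <= cmod z.
Proof.
rewrite /cmod -sqrtr_sqr ler_sqrt ?addr_ge0 ?sqr_ge0 //.
by rewrite -[X in X <= _]add0r lerD2r sqr_ge0.
Qed.

Lemma closure_norm_le (R : realType) (S : set R) (K : R) :
  (forall r, S r -> `|r| <= K) -> forall r, closure S r -> `|r| <= K.
Proof.
move=> SK; have Kcl : closed [set r : R | `|r| <= K].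
  have -> : [set r : R | `|r| <= K] = [set r | - K <= r] `&` [set r | r <= K].
    by apply/seteqP; split=> r /=; rewrite ler_norml => /andP.
  by move=> r; apply: closedI; [exact: closed_ge | exact: closed_le].
by move=> r /(closureS SK) /Kcl.
Qed.

Lemma unit_coef_le_hnorm (R : realType) (H : lmodType R[i]) (ip : H -> H -> R[i])
    (u x : H) (r : R) :
  is_inner_product ip -> ip x x = 1 -> ip u x = (r%:C)%C -> `|r| <= hnorm ip u.
Proof.
move=> [lin csym pos _] xx ux.
have xu : ip x u = (r%:C)%C.
  by rewrite csym ux; apply/eqP; rewrite eq_complex /= oppr0 !eqxx.
have uu : complex.Re (ip u u) = hnorm ip u ^+ 2 by rewrite /hnorm sqr_sqrtr.
pose z := (- r)%:C%C *: x + u.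
have xz : ip x z = 0.
  rewrite csym /z lin xx ux; apply/eqP; rewrite eq_complex /=.
  by apply/andP; split; apply/eqP; ring.
have := pos z; rewrite {2}/z lin xz mulr0 add0r csym lin xu => zz.
have hnorm_ge0 : 0 <= hnorm ip u := sqrtr_ge0 _.
rewrite -ler_sqr ?nnegrE // real_normK ?num_real // -uu.
by move: zz; case: (ip u u) => p q /=; lra.
Qed.

Lemma numrange_norm_le (R : realType) (H : lmodType R[i]) (ip : H -> H -> R[i])
    (B : H -> H) (M : R) :
  is_inner_product ip -> (forall x, hnorm ip (B x) <= M * hnorm ip x) ->
  forall r, numrange ip setT B r -> `|r| <= M.
Proof.
move=> ipH BM r [x [_ xx Bx]]; apply: le_trans (unit_coef_le_hnorm ipH xx Bx) _.
by have := BM x; rewrite /hnorm xx /= sqrtr1 mulr1.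
Qed.

Lemma ext_root_approx (R : realType) (c d : R) a b w e : 0 < e ->
  ext_root c d a b w ->
  exists a' b' w', [/\ pquart c d a' b' w' = 0, `|b - b'| < e & cmod (w' - w) < e].
Proof.
move=> e0; case: a => [a /= root| |] /=.
  exists a, b, w; rewrite subrr normr0; split=> //.
  by case: w {root} => x y; rewrite /cmod /= !subrr expr0n /= addr0 sqrtr0.
all: move=> [ak [bk [wk [_ /cvgrPdist_lt /(_ e e0) [Nb _ bkb] /(_ e e0) [Nw wkw] root]]]];
  exists (ak (maxn Nb Nw)), (bk (maxn Nb Nw)), (wk (maxn Nb Nw)).
all: by split; [|apply: bkb; rewrite /= leq_maxl | apply: wkw; rewrite leq_maxr].
Qed.

Section BetaHat.
Variables (R : realType) (c d : R).
Implicit Types a b x y K M eps : R.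

(* The sign conditions on [c] and [d] are explicit arguments rather than section
   hypotheses because [lra] does not see section hypotheses. *)

Definition hat_den x y := d * (x ^+ 2 + y ^+ 2) + 2 * c * y.
Definition hat_sos x y :=
  (- x ^+ 2 + y ^+ 2 + d * y + c) ^+ 2 + x ^+ 2 * (2 * y + d) ^+ 2.

Lemma betahatE x y :
  betahat c d (Complex x y) = - 2 * y * hat_sos x y / hat_den x y.
Proof. by []. Qed.

Lemma alphahatE x y :
  alphahat c d (Complex x y) = (2 * y + d) * (x ^+ 2 + y ^+ 2) ^+ 2 / hat_den x y.
Proof. by []. Qed.

Lemma hat_sos_ge0 x y : 0 <= hat_sos x y.
Proof. exact: addr_ge0 (sqr_ge0 _) (mulr_ge0 (sqr_ge0 _) (sqr_ge0 _)). Qed.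

Lemma hat_sos_gt0 x y : x != 0 -> hat_den x y != 0 -> 0 < hat_sos x y.
Proof.
move=> x0; apply: contraNT; rewrite lt_def hat_sos_ge0 andbT negbK => /eqP s0.
have x2 : 0 < x ^+ 2 by rewrite exprn_even_gt0.
have a0 := sqr_ge0 (- x ^+ 2 + y ^+ 2 + d * y + c); have b0 := sqr_ge0 (2 * y + d).
have /eqP : (2 * y + d) ^+ 2 = 0 by move: s0; rewrite /hat_sos; nra.
have /eqP : (- x ^+ 2 + y ^+ 2 + d * y + c) ^+ 2 = 0 by move: s0; rewrite /hat_sos; nra.
rewrite !sqrf_eq0 => /eqP s1 /eqP y0; apply/eqP; rewrite /hat_den.
have -> : y = - d / 2 by lra.
have -> : x ^+ 2 = y ^+ 2 + d * y + c by lra.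
have -> : y = - d / 2 by lra.
by field.
Qed.

(* [a] is eliminated by combining the real part of [p_(a,b)(x + iy) = 0], times
   [x (d + 2y)], with its imaginary part, times [c + dy - x^2 + y^2]. *)
Lemma pquart_root_betahat a b x y : x != 0 ->
  pquart c d a b (Complex x y) = 0 -> b * hat_den x y = - 2 * y * hat_sos x y.
Proof.
move=> x0 /eqP; rewrite /pquart eq_complex /= => /andP[/eqP re0 /eqP im0].
have := congr1 (fun t => t * (x * (d + 2 * y))) re0.
have := congr1 (fun t => t * (c + d * y - x ^+ 2 + y ^+ 2)) im0.
rewrite /= !mul0r => im0' re0'.
by apply: (mulfI x0); rewrite /hat_den /hat_sos; nra.
Qed.

Lemma hat_den_cmod (d0 : 0 < d) x y :
  hat_den x y = d * (cmod (Complex x y + Complex 0 (c / d)) ^+ 2 - (c / d) ^+ 2).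
Proof.
rewrite /cmod sqr_sqrtr /= ?addr0 ?addr_ge0 ?sqr_ge0 // /hat_den.
by field; rewrite gt_eqF.
Qed.

Lemma cldiskD_hat_den (c0 : 0 <= c) (d0 : 0 < d) x y :
  cldiskD c d (Complex x y) <-> hat_den x y <= 0.
Proof.
rewrite /cldiskD (hat_den_cmod d0) pmulr_rle0 // subr_le0.
by rewrite ler_sqr // nnegrE ?sqrtr_ge0 ?divr_ge0 // ltW.
Qed.

Lemma diskD_hat_den (c0 : 0 <= c) (d0 : 0 < d) x y :
  diskD c d (Complex x y) <-> hat_den x y < 0.
Proof.
rewrite /diskD (hat_den_cmod d0) pmulr_rlt0 // subr_lt0.
by rewrite ltr_sqr // nnegrE ?sqrtr_ge0 ?divr_ge0 // ltW.
Qed.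

Lemma bdD_hat_den (c0 : 0 <= c) (d0 : 0 < d) x y :
  bdD c d (Complex x y) <-> hat_den x y = 0.
Proof.
rewrite /bdD (hat_den_cmod d0); split=> [->|/eqP]; first by rewrite subrr mulr0.
by rewrite mulf_eq0 gt_eqF //= subr_eq0 eqrXn2 ?sqrtr_ge0 ?divr_ge0 ?(ltW d0) // => /eqP.
Qed.

Lemma hat_den_lt0_Im (c0 : 0 <= c) (d0 : 0 < d) x y : hat_den x y < 0 -> y < 0.
Proof.
rewrite /hat_den => den_lt0; rewrite ltNge; apply/negP => y0.
have : 0 <= d * (x ^+ 2 + y ^+ 2) by rewrite mulr_ge0 ?addr_ge0 ?sqr_ge0 ?ltW.
by have := mulr_ge0 c0 y0; lra.
Qed.

Lemma betahat_ge0_Pi_beta (c0 : 0 <= c) (d0 : 0 < d) x y :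
    x != 0 -> ~ bdD c d (Complex x y) ->
  0 <= betahat c d (Complex x y) <-> Pi_beta c d (Complex x y).
Proof.
move=> x0 /(bdD_hat_den c0 d0)/eqP den0; have sos_gt0 := hat_sos_gt0 x0 den0.
rewrite /Pi_beta (cldiskD_hat_den c0 d0) /= betahatE divr_ge0E //.
have -> : - 2 * y * hat_sos x y * hat_den x y = 2 * hat_sos x y * - (y * hat_den x y).
  by ring.
rewrite pmulr_rge0 ?mulr_gt0 // oppr_ge0.
have [den_lt0|den_ge0] := ltP (hat_den x y) 0.
  have y_lt0 := hat_den_lt0_Im c0 d0 den_lt0.
  by split=> [|[]]; [nra | rewrite ltW].
have {den_ge0} den_gt0 : 0 < hat_den x y by rewrite lt_def den0.
rewrite pmulr_lle0 //; split=> [y0|[]//]; split=> //.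
by apply/negP; rewrite -ltNge.
Qed.

Lemma alphahat_ge0_Pi_alpha (c0 : 0 <= c) (d0 : 0 < d) x y :
    x != 0 -> ~ bdD c d (Complex x y) ->
  0 <= alphahat c d (Complex x y) <-> Pi_alpha c d (Complex x y).
Proof.
move=> x0 /(bdD_hat_den c0 d0)/eqP den0.
rewrite /Pi_alpha (cldiskD_hat_den c0 d0) (diskD_hat_den c0 d0) /= alphahatE.
have r4_gt0 : 0 < (x ^+ 2 + y ^+ 2) ^+ 2.
  by apply: exprn_gt0; rewrite ltr_wpDr ?sqr_ge0 // exprn_even_gt0.
rewrite divr_ge0E // mulrAC pmulr_lge0 //.
have [den_lt0|den_ge0] := ltP (hat_den x y) 0.
  rewrite nmulr_lge0 //; split=> [h|[[]|[] _ h]]; last by lra.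
  - by right; split=> //; lra.
  - by rewrite (ltW den_lt0).
have {den_ge0} den_gt0 : 0 < hat_den x y by rewrite lt_def den0.
rewrite pmulr_lge0 //; split=> [h|[[] _ h|[]]]; last by lra.
- by left; split; [apply/negP; rewrite -ltNge | lra].
- by lra.
Qed.

Lemma hat_sos_ge_Im (c0 : 0 <= c) (d0 : 0 < d) x y :
  2 * d <= `|y| -> y ^+ 2 * (x ^+ 2 + y ^+ 2) <= 17 * hat_sos x y.
Proof.
move=> yd; have y2 : `|y| ^+ 2 = y ^+ 2 := real_normK (num_real y).
have dy : - (d * `|y|) <= d * y.
  have [y0|y0] := leP 0 y; last by rewrite ltr0_norm //; lra.
  by rewrite ger0_norm //; have := mulr_ge0 (ltW d0) y0; lra.
have dy2 : 2 * (d * `|y|) <= y ^+ 2 by rewrite -y2 expr2 mulrA ler_wpM2r.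
have y2_ge0 := sqr_ge0 y; have x2_ge0 := sqr_ge0 x.
have s_ge : y ^+ 2 <= 2 * (y ^+ 2 + d * y + c) by lra.
have yd2 : y ^+ 2 <= (2 * y + d) ^+ 2.
  have -> : (2 * y + d) ^+ 2 = 4 * y ^+ 2 + 4 * (d * y) + d ^+ 2 by ring.
  by have := sqr_ge0 d; lra.
have xy : x ^+ 2 * y ^+ 2 <= x ^+ 2 * (2 * y + d) ^+ 2 by rewrite ler_wpM2l.
have := sqr_ge0 (- x ^+ 2 + y ^+ 2 + d * y + c).
have := mulr_ge0 x2_ge0 (sqr_ge0 (2 * y + d)).
move=> xyd_ge0 s_ge0.
have y4 : y ^+ 2 * y ^+ 2 <= 16 * hat_sos x y.
  rewrite /hat_sos; have [xs|xs] := leP (2 * x ^+ 2) (y ^+ 2 + d * y + c).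
    have h : y ^+ 2 <= 4 * (- x ^+ 2 + y ^+ 2 + d * y + c) by lra.
    by have := ler_pM y2_ge0 y2_ge0 h h; lra.
  have h : y ^+ 2 <= 4 * x ^+ 2 by lra.
  by have := ler_pM y2_ge0 y2_ge0 h yd2; lra.
by move: y4; rewrite /hat_sos mulrDr; lra.
Qed.

Lemma norm_hat_den_le (c0 : 0 <= c) (d0 : 0 < d) x y :
  1 <= `|y| -> `|hat_den x y| <= (d + 2 * c) * (x ^+ 2 + y ^+ 2).
Proof.
move=> y1; have y2 : `|y| <= y ^+ 2.
  by rewrite -(real_normK (num_real y)) expr2 ler_peMl.
have /andP[cy1 cy2] : - (c * y ^+ 2) <= c * y <= c * y ^+ 2.
  by rewrite -ler_norml normrM ger0_norm // ler_wpM2l.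
have := mulr_ge0 c0 (sqr_ge0 x); have := mulr_ge0 (ltW d0) (sqr_ge0 x).
have := mulr_ge0 (ltW d0) (sqr_ge0 y).
by rewrite ler_norml /hat_den => *; apply/andP; split; lra.
Qed.

Lemma betahat_eq_norm_le K b x y : `|b| <= K ->
  b * hat_den x y = - 2 * y * hat_sos x y -> 2 * `|y| * hat_sos x y <= K * `|hat_den x y|.
Proof.
move=> bK E; apply: le_trans (ler_wpM2r (normr_ge0 _) bK).
by rewrite -normrM E !normrM normrN normr_nat (ger0_norm (hat_sos_ge0 _ _)).
Qed.

Definition Im_bound K := 1 + 2 * d + 9 * K * (d + 2 * c).

Lemma Im_bound_ge0 (c0 : 0 <= c) (d0 : 0 < d) K : 0 <= K -> 0 <= Im_bound K.
Proof.
move=> K0; rewrite /Im_bound.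
by have := mulr_ge0 K0 c0; have := mulr_ge0 K0 (ltW d0); lra.
Qed.

(* Once [|y| >= 1 + 2d], [hat_sos_ge_Im] and [norm_hat_den_le] turn
   [2 |y| hat_sos <= K |hat_den|] into [2 |y|^3 (x^2 + y^2) <= 17 K (d + 2c) (x^2 + y^2)]. *)
Lemma betahat_eq_Im_le (c0 : 0 <= c) (d0 : 0 < d) K b x y : `|b| <= K ->
  b * hat_den x y = - 2 * y * hat_sos x y -> `|y| <= Im_bound K.
Proof.
move=> bK E; have K0 : 0 <= K := le_trans (normr_ge0 b) bK.
have := mulr_ge0 K0 (ltW d0); have := mulr_ge0 K0 c0; rewrite /Im_bound => Kc Kd.
have [|y_big] := ltP `|y| (1 + 2 * d); first by lra.
have y1 : 1 <= `|y| by lra.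
have y2 : `|y| * `|y| = y ^+ 2 by rewrite -expr2 real_normK ?num_real.
have r0 : 0 < x ^+ 2 + y ^+ 2.
  by rewrite ltr_wpDl ?sqr_ge0 // -y2 (lt_le_trans ltr01) ?mulr_ege1.
have key : 2 * `|y| * hat_sos x y <= K * ((d + 2 * c) * (x ^+ 2 + y ^+ 2)).
  apply: le_trans (betahat_eq_norm_le bK E) _.
  by rewrite ler_wpM2l // norm_hat_den_le.
have S : `|y| * (y ^+ 2 * (x ^+ 2 + y ^+ 2)) <= `|y| * (17 * hat_sos x y).
  by rewrite ler_wpM2l // hat_sos_ge_Im //; lra.
have y3 : `|y| <= `|y| * y ^+ 2 by rewrite -y2 mulrA ler_peMl ?mulr_ege1.
have : 2 * (`|y| * y ^+ 2) * (x ^+ 2 + y ^+ 2) <=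
       17 * (K * (d + 2 * c)) * (x ^+ 2 + y ^+ 2) by lra.
by rewrite ler_pM2r //; lra.
Qed.

Definition Re_threshold M := 2 * (M ^+ 2 + d * M + c) + d * M ^+ 2 + 2 * c * M.

Lemma Re_threshold_ge0 (c0 : 0 <= c) (d0 : 0 < d) M : 0 <= M -> 0 <= Re_threshold M.
Proof.
move=> M0; rewrite /Re_threshold; have := sqr_ge0 M; have := mulr_ge0 (ltW d0) M0.
by have := mulr_ge0 (ltW d0) (sqr_ge0 M); have := mulr_ge0 c0 M0; lra.
Qed.

(* Beyond the threshold, [hat_sos >= (x^2/2)^2] and [|hat_den| <= (d + 1) x^2]. *)
Lemma betahat_eq_Im_Re2_le (c0 : 0 <= c) (d0 : 0 < d) K M b x y : `|b| <= K ->
    b * hat_den x y = - 2 * y * hat_sos x y -> `|y| <= M -> x != 0 ->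
  Re_threshold M <= x ^+ 2 -> `|y| * x ^+ 2 <= 2 * K * (d + 1).
Proof.
move=> bK E yM x0; rewrite /Re_threshold => xM.
have K0 : 0 <= K := le_trans (normr_ge0 b) bK.
have M0 : 0 <= M := le_trans (normr_ge0 y) yM.
have x2 : 0 < x ^+ 2 by rewrite exprn_even_gt0.
have /andP[yM1 yM2] : - M <= y <= M by rewrite -ler_norml.
have y2 : y ^+ 2 <= M ^+ 2 by rewrite -(real_normK (num_real y)) ler_sqr ?nnegrE.
have dy : d * y <= d * M := ler_wpM2l (ltW d0) yM2.
have dy2 : d * y ^+ 2 <= d * M ^+ 2 := ler_wpM2l (ltW d0) y2.
have /andP[cy1 cy2] : - (c * M) <= c * y <= c * M.
  by rewrite -ler_norml normrM ger0_norm // ler_wpM2l.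
have dM : 0 <= d * M := mulr_ge0 (ltW d0) M0.
have dM2 : 0 <= d * M ^+ 2 := mulr_ge0 (ltW d0) (sqr_ge0 M).
have cM : 0 <= c * M := mulr_ge0 c0 M0.
have M2 := sqr_ge0 M.
have half : x ^+ 2 / 2 <= x ^+ 2 - (y ^+ 2 + d * y + c) by lra.
have half_ge0 : 0 <= x ^+ 2 / 2 by lra.
have sos_ge : x ^+ 2 / 2 * (x ^+ 2 / 2) <= hat_sos x y.
  have := ler_pM half_ge0 half_ge0 half half.
  have := mulr_ge0 (sqr_ge0 x) (sqr_ge0 (2 * y + d)).
  by rewrite /hat_sos; lra.
have den_le : `|hat_den x y| <= (d + 1) * x ^+ 2.
  have := mulr_ge0 (ltW d0) (sqr_ge0 x); have := mulr_ge0 (ltW d0) (sqr_ge0 y).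
  by rewrite ler_norml /hat_den => *; apply/andP; split; lra.
have := le_trans (betahat_eq_norm_le bK E) (ler_wpM2l K0 den_le).
have := ler_wpM2l (mulr_ge0 (ler0n _ 2) (normr_ge0 y)) sos_ge.
move=> sos_le den_ge.
have : `|y| * x ^+ 2 * x ^+ 2 <= 2 * K * (d + 1) * x ^+ 2 by lra.
by rewrite ler_pM2r.
Qed.

Lemma hat_den_ge_Re2 (c0 : 0 <= c) (d0 : 0 < d) M x y : `|y| <= M ->
  4 * c * M <= d * x ^+ 2 -> d * x ^+ 2 / 2 <= hat_den x y.
Proof.
move=> yM xM; have M0 : 0 <= M := le_trans (normr_ge0 y) yM.
have /andP[cy _] : - (c * M) <= c * y <= c * M.
  by rewrite -ler_norml normrM ger0_norm // ler_wpM2l.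
by have := mulr_ge0 (ltW d0) (sqr_ge0 y); rewrite /hat_den; lra.
Qed.

Definition asym_const M := d * M ^+ 2 + 2 * d ^+ 2 * M + 2 * d * c + d ^+ 3 + 2 * c * M
  + d * (M ^+ 2 + d * M + c) ^+ 2.

Lemma hat_sos_asym_err (c0 : 0 <= c) (d0 : 0 < d) M x y : `|y| <= M -> 1 <= x ^+ 2 ->
  `|d * hat_sos x y - x ^+ 2 * hat_den x y| <= x ^+ 2 * asym_const M.
Proof.
move=> yM x1; have M0 : 0 <= M := le_trans (normr_ge0 y) yM.
have -> : d * hat_sos x y - x ^+ 2 * hat_den x y =
    x ^+ 2 * (d * y ^+ 2 + 2 * d ^+ 2 * y - 2 * d * c + d ^+ 3 - 2 * c * y)
    + d * (y ^+ 2 + d * y + c) ^+ 2 by rewrite /hat_sos /hat_den; ring.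
have /andP[yM1 yM2] : - M <= y <= M by rewrite -ler_norml.
have y2 : y ^+ 2 <= M ^+ 2 by rewrite -(real_normK (num_real y)) ler_sqr ?nnegrE.
have d2 := sqr_ge0 d; have d3 : 0 <= d ^+ 3 by rewrite exprn_ge0 ?ltW.
have := ler_wpM2l (ltW d0) y2; have := ler_wpM2l d2 yM1; have := ler_wpM2l d2 yM2.
have := ler_wpM2l c0 yM1; have := ler_wpM2l c0 yM2; have := mulr_ge0 (ltW d0) c0.
have := ler_wpM2l (ltW d0) yM1; have := ler_wpM2l (ltW d0) yM2.
have := mulr_ge0 (ltW d0) (sqr_ge0 y); have := mulr_ge0 (ltW d0) (sqr_ge0 M).
have := mulr_ge0 (ltW d0) M0; have := sqr_ge0 M; have := sqr_ge0 y => *.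
have lin_le : `|d * y ^+ 2 + 2 * d ^+ 2 * y - 2 * d * c + d ^+ 3 - 2 * c * y|
    <= d * M ^+ 2 + 2 * d ^+ 2 * M + 2 * d * c + d ^+ 3 + 2 * c * M.
  by rewrite ler_norml; apply/andP; split; lra.
have sq_le : (y ^+ 2 + d * y + c) ^+ 2 <= (M ^+ 2 + d * M + c) ^+ 2.
  have s_le : `|y ^+ 2 + d * y + c| <= M ^+ 2 + d * M + c.
    by rewrite ler_norml; apply/andP; split; lra.
  have S_ge0 : 0 <= M ^+ 2 + d * M + c by lra.
  by rewrite -(real_normK (num_real (_ + c))) ler_sqr ?nnegrE.
apply: le_trans (ler_normD _ _) _.
rewrite [`|x ^+ 2 * _|]normrM [`|d * _|]normrM (ger0_norm (sqr_ge0 x)) (gtr0_norm d0).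
rewrite (ger0_norm (sqr_ge0 (_ + c))) /asym_const mulrDr lerD ?ler_wpM2l ?sqr_ge0 //.
apply: le_trans (ler_wpM2l (ltW d0) sq_le) _.
by rewrite ler_peMl // mulr_ge0 ?sqr_ge0 ?ltW.
Qed.

Lemma betahat_asym (c0 : 0 <= c) (d0 : 0 < d) M eps x y : 0 < eps -> `|y| <= M ->
    1 <= x ^+ 2 -> 4 * c * M <= d * x ^+ 2 -> 2 * asym_const M <= eps * d * x ^+ 2 ->
  `|betahat c d (Complex x y) - - 2 * y * x ^+ 2 / d| <= eps * `|- 2 * y * x ^+ 2 / d|.
Proof.
move=> eps0 yM x1 xc xe; have den_ge := hat_den_ge_Re2 c0 d0 yM xc.
have dx : 0 < d * x ^+ 2 by rewrite mulr_gt0 // (lt_le_trans ltr01 x1).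
have den0 : 0 < hat_den x y by lra.
have xden : 0 < x ^+ 2 * hat_den x y by rewrite mulr_gt0 //; lra.
have -> : betahat c d (Complex x y) - - 2 * y * x ^+ 2 / d = - 2 * y * x ^+ 2 / d *
    ((d * hat_sos x y - x ^+ 2 * hat_den x y) / (x ^+ 2 * hat_den x y)).
  rewrite betahatE; field.
  by rewrite (gt_eqF den0) (gt_eqF d0) andbT -sqrf_eq0 gt_eqF //; lra.
rewrite normrM mulrC ler_wpM2r // normrM normfV (gtr0_norm xden) ler_pdivrMr //.
apply: le_trans (hat_sos_asym_err c0 d0 yM x1) _.
rewrite mulrCA ler_wpM2l ?sqr_ge0 //.
by apply: le_trans (ler_wpM2l (ltW eps0) den_ge); lra.
Qed.

End BetaHat.

Section WOmegaBounds.
Variables (R : realType) (c d K : R) (WA WB : set R).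
Hypothesis WB_bounded : forall b, closure WB b -> `|b| <= K.
Implicit Types x y e : R.

Lemma WOmega_K_ge0 w : WOmega c d WA WB w -> 0 <= K.
Proof. by case=> _ [b [_ /WB_bounded bK _]]; exact: le_trans bK. Qed.

Lemma WOmega_approx x y e : WOmega c d WA WB (Complex x y) -> 0 < e ->
  exists a' b' x' y', [/\ pquart c d a' b' (Complex x' y') = 0, `|b'| <= K + 1,
                          `|x' - x| < e & `|y' - y| < e].
Proof.
move=> [a [b [_ /WB_bounded bK root]]] e0.
have e1 : 0 < Num.min e 1 by rewrite lt_min e0 ltr01.
have [a' [b' [[x' y'] [root' bb' ww']]]] := ext_root_approx e1 root.
move: bb' ww'; rewrite !lt_min => /andP[_ bb'] /andP[ww' _].
exists a', b', x', y'; split=> //.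
- by have := lerB_dist b' b; rewrite distrC; lra.
- exact: le_lt_trans (normr_Re_le_cmod _) ww'.
- exact: le_lt_trans (normr_Im_le_cmod _) ww'.
Qed.

Definition WOmega_Im_bound := Im_bound c d (K + 1) + 1.

Lemma WOmega_Im_le (c0 : 0 <= c) (d0 : 0 < d) x y :
  WOmega c d WA WB (Complex x y) -> x != 0 -> `|y| <= WOmega_Im_bound.
Proof.
move=> W x0; have x_gt0 : 0 < `|x| by rewrite normr_gt0.
have e0 : 0 < Num.min 1 (`|x| / 2) by rewrite lt_min ltr01 divr_gt0.
have [a' [b' [x' [y' [root bK]]]]] := WOmega_approx W e0.
rewrite !lt_min => /andP[_ xx] /andP[yy _].
have x'0 : x' != 0.
  by rewrite -normr_gt0; have := lerB_dist x x'; rewrite distrC; lra.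
have := betahat_eq_Im_le c0 d0 bK (pquart_root_betahat x'0 root).
by rewrite /WOmega_Im_bound; have := lerB_dist y y'; rewrite distrC; lra.
Qed.

(* The approximating root is taken at distance [x^-2], which costs at most [1]
   in [|y| x^2]. *)
Lemma WOmega_Im_Re2_le (c0 : 0 <= c) (d0 : 0 < d) x y :
    WOmega c d WA WB (Complex x y) ->
    4 * (1 + Re_threshold c d (Im_bound c d (K + 1))) <= x ^+ 2 ->
  `|y| * x ^+ 2 <= 8 * (K + 1) * (d + 1) + 1.
Proof.
set M := Im_bound c d (K + 1) => W xM.
have K0 := WOmega_K_ge0 W.
have M0 : 0 <= M by rewrite Im_bound_ge0 //; lra.
have T0 := Re_threshold_ge0 c0 d0 M0.
have x4 : 4 <= x ^+ 2 by lra.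
have x_ge2 : 2 <= `|x|.
  by rewrite -[2]ger0_norm // -ler_sqr ?nnegrE // !real_normK ?num_real //; lra.
have e0 : 0 < (x ^+ 2)^-1 by rewrite invr_gt0; lra.
have ex : (x ^+ 2)^-1 * x ^+ 2 = 1 by rewrite mulVf // gt_eqF //; lra.
have e1 : (x ^+ 2)^-1 <= 1 / 4 by have := ler_wpM2l (ltW e0) x4; rewrite ex; lra.
have [a' [b' [x' [y' [root bK xx yy]]]]] := WOmega_approx W e0.
have x_x' : `|x| <= 2 * `|x'| by have := lerB_dist x x'; rewrite distrC; lra.
have x'0 : x' != 0 by rewrite -normr_gt0; lra.
have x2_x'2 : x ^+ 2 <= 4 * x' ^+ 2.
  have : `|x| ^+ 2 <= (2 * `|x'|) ^+ 2 by rewrite ler_sqr ?nnegrE ?mulr_ge0.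
  by rewrite exprMn !real_normK ?num_real //; lra.
have E := pquart_root_betahat x'0 root.
have y'M : `|y'| <= M := betahat_eq_Im_le c0 d0 bK E.
have T_x' : Re_threshold c d M <= x' ^+ 2 by lra.
have := betahat_eq_Im_Re2_le c0 d0 bK E y'M x'0 T_x'.
have := ler_wpM2l (normr_ge0 y') x2_x'2.
have : `|y| * x ^+ 2 <= (`|y'| + (x ^+ 2)^-1) * x ^+ 2.
  by rewrite ler_wpM2r ?sqr_ge0 //; have := lerB_dist y y'; rewrite distrC; lra.
by rewrite mulrDl ex; lra.
Qed.

Lemma WOmega_seq_asymptotics (c0 : 0 <= c) (d0 : 0 < d) (wn : nat -> R[i]) :
    (forall n, WOmega c d WA WB (wn n)) ->
    (fun n => `|complex.Re (wn n)|) @ \oo --> +oo ->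
  (fun n => betahat c d (wn n))
     ~_\oo (fun n => - 2 * complex.Im (wn n) * complex.Re (wn n) ^+ 2 / d)
  /\ (fun n => complex.Im (wn n)) =O_\oo (fun n => complex.Re (wn n) ^- 2).
Proof.
move=> W /cvgryPgt Re_big.
have Re2_big X : \forall n \near \oo, X <= complex.Re (wn n) ^+ 2.
  near=> n; have : `|X| + 1 < `|complex.Re (wn n)| by near: n; exact: Re_big.
  rewrite -(real_normK (num_real (complex.Re _))) expr2 => X_lt.
  have r1 : 1 <= `|complex.Re (wn n)| by have := normr_ge0 X; lra.
  by have := ler_peMl (normr_ge0 (complex.Re (wn n))) r1; have := ler_norm X; lra.
split.
  apply/eqaddoP => eps eps0; have ed0 : 0 < eps * d by rewrite mulr_gt0.
  near=> n; rewrite !fctE.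
  have x1 : 1 <= complex.Re (wn n) ^+ 2 by near: n; exact: Re2_big.
  have xc : 4 * c * WOmega_Im_bound / d <= complex.Re (wn n) ^+ 2.
    by near: n; exact: Re2_big.
  have xe : 2 * asym_const c d WOmega_Im_bound / (eps * d) <= complex.Re (wn n) ^+ 2.
    by near: n; exact: Re2_big.
  move: (W n) x1 xc xe; case: (wn n) => x y /= Wn x1.
  rewrite !ler_pdivrMr // !(mulrC (x ^+ 2)) => xc xe.
  have x0 : x != 0 by rewrite -sqrf_eq0 gt_eqF //; lra.
  have yM := WOmega_Im_le c0 d0 Wn x0.
  by apply: (betahat_asym c0 d0 eps0 yM x1 xc xe).
have K0 := WOmega_K_ge0 (W 0%N).
apply/eqO_exP; exists (8 * (K + 1) * (d + 1) + 1).
  by have := mulr_ge0 (ler_wpDl K0 ler01) (ltW d0); lra.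
near=> n.
have xb : 4 * (1 + Re_threshold c d (Im_bound c d (K + 1))) <= complex.Re (wn n) ^+ 2.
  by near: n; exact: Re2_big.
have x1 : 1 <= complex.Re (wn n) ^+ 2 by near: n; exact: Re2_big.
move: (W n) xb x1; case: (wn n) => x y /= Wn xb x1.
rewrite normfV (ger0_norm (sqr_ge0 x)) ler_pdivlMr; last by lra.
by apply: (WOmega_Im_Re2_le c0 d0 Wn xb).
Unshelve. all: by end_near.
Qed.

End WOmegaBounds.

Theorem corollary2p7 (R : realType) (H : lmodType R[i]) (ip : H -> H -> R[i])
  (DA : set H) (A B : H -> H) (c d : R) :
  is_hilbert ip ->
  unbounded_selfadjoint ip DA A ->
  bounded_selfadjoint ip B ->
  (exists x : H, B x <> 0) ->
  0 <= c -> 0 < d ->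
  let W := WOmega c d (numrange ip DA A) (numrange ip setT B) in
  [/\ (* (i) *)
      (exists M : R, forall w : R[i], complex.Re w != 0 -> M < `|complex.Im w| -> ~ W w),
      (* (ii) *)
      (forall wn : nat -> R[i], (forall n, W (wn n)) ->
         (fun n => `|complex.Re (wn n)|) @ \oo --> +oo ->
         (fun n => betahat c d (wn n))
            ~_\oo (fun n => - 2 * complex.Im (wn n) * complex.Re (wn n) ^+ 2 / d)
         /\ (fun n => complex.Im (wn n)) =O_\oo (fun n => complex.Re (wn n) ^- 2)),
      (* (iii) *)
      (forall w : R[i], complex.Re w != 0 -> ~ bdD c d w ->
         (0 <= betahat c d w <-> Pi_beta c d w)) &
      (* (iv) *)
      (forall w : R[i], complex.Re w != 0 -> ~ bdD c d w ->
         (0 <= alphahat c d w <-> Pi_alpha c d w))].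

Proof.
move=> [ip_inner _] _ [_ [M BM] _] _ c0 d0 W.
have WB_bounded := closure_norm_le (numrange_norm_le ip_inner BM).
split.
- exists (WOmega_Im_bound c d M) => -[x y] /= x0 yM Wxy.
  by have := WOmega_Im_le WB_bounded c0 d0 Wxy x0; lra.
- exact: WOmega_seq_asymptotics WB_bounded c0 d0.
- by move=> [x y] /= x0; exact: betahat_ge0_Pi_beta.
- by move=> [x y] /= x0; exact: alphahat_ge0_Pi_alpha.
Qed.
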